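(* Let $k\ge 16$, $n=2^k$, $t=\lceil 2\log k\rceil$, and let $P$ be an isothetic drawing of the Horton set of $n$ points with slab $R$ as in the context. Then either $P$ has size at least $n^{\frac12\log n}$, or there exist vertical lines $\ell_1,\ell_2,\ell_3,\ell_4$, ordered from left to right and all contained in the interior of $R$, such that exactly $2^{k-t}$ points of $P$ lie between $\ell_1$ and $\ell_2$, exactly $2^{k-t}$ points of $P$ lie between $\ell_3$ and $\ell_4$, and, writing $d_1$ for the distance between $\ell_1$ and $\ell_2$ and $d_2$ for the distance between $\ell_3$ and $\ell_4$, we have $\frac12\le d_1/d_2\le 2$.
   Context: All logarithms are base 2. For a finite set $S$ of points in the plane with pairwise distinct $x$-coordinates, list its points in increasing order of $x$-coordinate as $p_0,\dots,p_{|S|-1}$ and set $S_{\mathrm{even}}=\{p_0,p_2,\dots\}$, $S_{\mathrm{odd}}=\{p_1,p_3,\dots\}$. For point sets $X,Y$, $X$ is high above $Y$ if every line through two points of $X$ lies strictly above every point of $Y$ and every line through two points of $Y$ lies strictly below every point of $X$. A Horton set of $2^k$ points is defined recursively: a set $H$ of $2^k$ points, no three collinear, with pairwise distinct $x$-coordinates, such that for $k=0$ it is a single point and for $k\ge1$ both $H_{\mathrm{even}}$ and $H_{\mathrm{odd}}$ are Horton sets of $2^{k-1}$ points and $H_{\mathrm{odd}}$ is high above $H_{\mathrm{even}}$. An isothetic drawing of the Horton set of $n=2^k$ points is a Horton set of $n$ points all of whose points have integer coordinates. The size of a set of points is the maximum absolute value of the coordinates of its points. With $p_0,\dots,p_{n-1}$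 the points of $P$ sorted by $x$-coordinate, $R$ is the closed vertical slab bounded by the vertical lines through $p_{n/4}$ and $p_{3n/4-1}$. *)

(* Points are pairs of integers; a finite point set with
   pairwise distinct x-coordinates is represented by the list of its points
   sorted by strictly increasing x-coordinate. *)
From HB Require Import structures.
From mathcomp Require Import all_boot all_order all_algebra.
Set Implicit Arguments. Unset Strict Implicit. Unset Printing Implicit Defensive.
Import Order.TTheory GRing.Theory Num.Theory.
Local Open Scope ring_scope.

Definition point := (int * int)%type.

Definition ltx (p q : point) : bool := p.1 < q.1.

Definition orient (p q r : point) : int :=
  (q.1 - p.1) * (r.2 - p.2) - (q.2 - p.2) * (r.1 - p.1).

Definition evens (s : seq point) : seq point :=
  [seq nth (0, 0) s i | i <- iota 0 (size s) & ~~ odd i].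
Definition odds (s : seq point) : seq point :=
  [seq nth (0, 0) s i | i <- iota 0 (size s) & odd i].

Definition no_three_collinear (s : seq point) : Prop :=
  forall i j l : nat, (i < j)%N -> (j < l)%N -> (l < size s)%N ->
    orient (nth (0,0) s i) (nth (0,0) s j) (nth (0,0) s l) != 0.

(* For a < b in x-order, a point y lies
   strictly below the line ab iff orient a b y < 0, strictly above iff > 0. *)
Definition high_above (X Y : seq point) : Prop :=
  (forall a b y, a \in X -> b \in X -> ltx a b -> y \in Y -> orient a b y < 0)
  /\ (forall c d x, c \in Y -> d \in Y -> ltx c d -> x \in X -> 0 < orient c d x).

Fixpoint horton (k : nat) (s : seq point) : Prop :=
  [/\ sorted ltx s, no_three_collinear s, size s = (2 ^ k)%N &
    match k with
    | 0 => True
    | k'.+1 => [/\ horton k' (evens s), horton k' (odds s) & high_above (odds s) (evens s)]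
    end].

Definition pset_size (s : seq point) : nat :=
  \max_(p <- s) maxn `|p.1|%N `|p.2|%N.

Definition count_between (R : realFieldType) (s : seq point) (a b : R) : nat :=
  count (fun p : point => (a < p.1%:~R) && (p.1%:~R < b)) s.

From HB Require Import structures.
From mathcomp Require Import all_boot all_order all_algebra zify lra.
Set Implicit Arguments. Unset Strict Implicit. Unset Printing Implicit Defensive.
Import Order.TTheory GRing.Theory Num.Theory.
Local Open Scope ring_scope.

(* Cut the middle half of P into N = 2^(t-1) - 1
   consecutive blocks of m = 2^(k-t) points.  Fencing a block by vertical lines
   at distance 1/4 outside its extreme points captures exactly its m points, and
   the fence width is w + 1/2, where w >= m - 1 is the x-span of the block.  If
   two blocks have spans with the same floor(log w), their fence widths are
   within a factor 2 of each other.  Otherwise the N values floor(log w) >= k-t-1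
   are distinct, so one of them is at least k - t + N - 2 >= k^2/2 + 1 (as
   2^t >= k^2 and t <= k - 4), and that block has a coordinate of absolute value
   at least 2^(k^2/2). *)

Lemma horton_sorted_size k s : horton k s -> sorted ltx s /\ size s = (2 ^ k)%N.
Proof. by case: k => [|k] [? _ ? _]. Qed.

Definition xcoord (P : seq point) (i : nat) : int := (nth (0,0) P i).1.

Lemma ltx_trans : transitive ltx.
Proof. by move=> a b c; apply: lt_trans. Qed.

Lemma abs_xcoord_le_size P i : (i < size P)%N -> (`|xcoord P i| <= pset_size P)%N.
Proof.
move=> /(mem_nth (0,0)) Pi; apply: leq_trans (leq_maxl _ `|(nth (0,0) P i).2|) _.
exact: (@leq_bigmax_seq _ P xpredT (fun p : point => maxn `|p.1| `|p.2|) _ Pi).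
Qed.

Lemma intr_sub_quarter_lt (R : realFieldType) (u v : int) :
  (u%:~R - 1/4 < v%:~R :> R) = (u <= v).
Proof.
case: (leP u v) => [|vu]; first by rewrite -(ler_int R) => uv; apply/idP; lra.
have : v + 1 <= u by lia.
by rewrite -(ler_int R) intrD => vu'; apply/negbTE; rewrite -leNgt; lra.
Qed.

Lemma intr_lt_add_quarter (R : realFieldType) (u v : int) :
  (v%:~R < u%:~R + 1/4 :> R) = (v <= u).
Proof.
case: (leP v u) => [|uv]; first by rewrite -(ler_int R) => vu; apply/idP; lra.
have : u + 1 <= v by lia.
by rewrite -(ler_int R) intrD => uv'; apply/negbTE; rewrite -leNgt; lra.
Qed.

Lemma count_iota_window a m sz : (a + m <= sz)%N ->
  count (fun i => a <= i < a + m)%N (iota 0 sz) = m.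
Proof.
move=> amsz; rewrite -(subnKC amsz) -(subnKC (leq_addr m a)) addKn.
rewrite !iotaD !count_cat add0n.
rewrite (eq_in_count (a2 := pred0) (s := iota 0 a)); last first.
  by move=> i; rewrite mem_iota /=; lia.
rewrite (eq_in_count (a2 := predT) (s := iota a m)); last first.
  by move=> i; rewrite mem_iota /=; lia.
rewrite (eq_in_count (a2 := pred0) (s := iota (a + m) _)); last first.
  by move=> i; rewrite mem_iota /=; lia.
by rewrite !count_pred0 count_predT size_iota add0n addn0.
Qed.

Section SortedByX.

Variable P : seq point.
Hypothesis sortedP : sorted ltx P.

Lemma xcoord_lt i j : (i < j)%N -> (j < size P)%N -> xcoord P i < xcoord P j.
Proof.
move=> ij j_lt; apply: (sorted_ltn_nth ltx_trans (0,0) sortedP) => //.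
by rewrite inE (ltn_trans ij).
Qed.

Lemma xcoord_le i j : (i < size P)%N -> (j < size P)%N ->
  (xcoord P i <= xcoord P j) = (i <= j)%N.
Proof.
move=> i_lt j_lt; case: (ltngtP i j) => [ij|ji|->]; last exact: lexx.
- exact/ltW/xcoord_lt.
- by apply/negbTE; rewrite -ltNge xcoord_lt.
Qed.

Lemma xcoord_addn i d : (i + d < size P)%N -> xcoord P i + d%:Z <= xcoord P (i + d).
Proof.
elim: d => [|d IHd] id_lt; first by rewrite addn0 addr0.
rewrite addnS in id_lt; have := IHd (ltnW id_lt).
by have := xcoord_lt (ltnSn (i + d)) id_lt; rewrite addnS; lia.
Qed.

Lemma xcoord_ler_add1 (R : realFieldType) i j : (i < j)%N -> (j < size P)%N ->
  (xcoord P i)%:~R + 1 <= (xcoord P j)%:~R :> R.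
Proof.
move=> ij j_lt; have : xcoord P i + 1 <= xcoord P j by have := xcoord_lt ij j_lt; lia.
by rewrite -(ler_int R) intrD.
Qed.

Lemma count_between_block (R : realFieldType) a m : (0 < m)%N -> (a + m <= size P)%N ->
  count_between P ((xcoord P a)%:~R - 1/4 : R) ((xcoord P (a + m - 1))%:~R + 1/4) = m.
Proof.
move=> m_gt0 am_le; rewrite -[RHS](count_iota_window am_le).
rewrite /count_between -[X in count _ X](mkseq_nth (0,0) P) /mkseq count_map.
apply: eq_in_count => i; rewrite mem_iota /= => i_lt.
rewrite intr_sub_quarter_lt intr_lt_add_quarter -/(xcoord P i) !xcoord_le //; lia.
Qed.

End SortedByX.

Lemma trunc_log2_eq_ratio (R : realFieldType) (u v : nat) : (0 < u)%N -> (0 < v)%N ->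
  trunc_log 2 u = trunc_log 2 v -> 1/2 <= (u%:R + 1/2 : R) / (v%:R + 1/2) <= 2.
Proof.
move=> u_gt0 v_gt0 uv.
have /andP [lo_u hi_u] := trunc_log_bounds (isT : (1 < 2)%N) u_gt0.
have /andP [lo_v hi_v] := trunc_log_bounds (isT : (1 < 2)%N) v_gt0.
move: lo_u hi_u hi_v; rewrite uv expnS => lo_u hi_u hi_v.
have : (u < 2 * v)%N by lia.
have : (v < 2 * u)%N by lia.
rewrite -!(ltr_nat R) !natrM => vu uv'.
have v_ge0 : 0 <= v%:R :> R := ler0n _ _.
have u_ge0 : 0 <= u%:R :> R := ler0n _ _.
by rewrite ler_pdivlMr ?ler_pdivrMr; [apply/andP; split; lra | lra | lra].
Qed.

Lemma uniq_ge_has_large (c : nat -> nat) L N : (0 < N)%N ->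
  (forall j, j < N -> L <= c j)%N -> uniq [seq c j | j <- iota 0 N] ->
  exists2 j, (j < N)%N & (L + N - 1 <= c j)%N.
Proof.
move=> N_gt0 c_ge c_uniq.
have [/hasP [j] | /hasPn small] := boolP (has (fun j => L + N - 1 <= c j)%N (iota 0 N)).
  by rewrite mem_iota => /andP [_ jN] cj; exists j.
have sub : {subset [seq c j | j <- iota 0 N] <= iota L N.-1}.
  move=> _ /mapP [j jN ->]; have := small j jN; rewrite mem_iota in jN.
  rewrite mem_iota; have := c_ge j (andP jN).2; lia.
by have := uniq_leq_size c_uniq sub; rewrite size_map !size_iota; lia.
Qed.

Section Blocks.

Variables (R : realFieldType) (P : seq point) (a0 m N : nat).

Definition block_start j := (a0 + j * m)%N.
Definition block_end j := (block_start j + m - 1)%N.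
Definition block_width j := `|xcoord P (block_end j) - xcoord P (block_start j)|%N.
Definition window_lo j : R := (xcoord P (block_start j))%:~R - 1/4.
Definition window_hi j : R := (xcoord P (block_end j))%:~R + 1/4.

Hypothesis m_gt0 : (0 < m)%N.

Lemma block_end_lt j : (j < N)%N -> (block_end j < a0 + N * m)%N.
Proof.
move=> jN; have : (j.+1 * m <= N * m)%N by rewrite leq_mul2r jN orbT.
by rewrite /block_end /block_start; lia.
Qed.

Hypotheses (sortedP : sorted ltx P) (blocks_fit : (a0 + N * m <= size P)%N).

Lemma block_widthE j : (j < N)%N ->
  (block_width j)%:Z = xcoord P (block_end j) - xcoord P (block_start j)
  /\ (m - 1 <= block_width j)%N.
Proof.
move=> jN; have := xcoord_addn sortedP (i := block_start j) (d := m - 1).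
have -> : (block_start j + (m - 1) = block_end j)%N by rewrite /block_end; lia.
by move=> /(_ (leq_trans (block_end_lt jN) blocks_fit)); rewrite /block_width; lia.
Qed.

Lemma block_width_le_size j : (j < N)%N -> (block_width j <= 2 * pset_size P)%N.
Proof.
move=> jN; have end_lt := leq_trans (block_end_lt jN) blocks_fit.
have start_lt : (block_start j < size P)%N by move: end_lt; rewrite /block_end; lia.
have := abs_xcoord_le_size start_lt; have := abs_xcoord_le_size end_lt.
by rewrite /block_width; lia.
Qed.

Lemma pset_size_ge_block_width e j : (j < N)%N ->
  (2 ^ e.+1 <= block_width j)%N -> (2 ^ e <= pset_size P)%N.
Proof. by move=> jN; have := block_width_le_size jN; rewrite expnS; lia. Qed.

Lemma count_window j : (j < N)%N -> count_between P (window_lo j) (window_hi j) = m.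
Proof.
move=> jN; apply: count_between_block => //.
by have := block_end_lt jN; rewrite /block_end /block_start; lia.
Qed.

Lemma window_widthE j : (j < N)%N ->
  window_hi j - window_lo j = (block_width j)%:R + 1/2.
Proof.
case/block_widthE => wE _; rewrite /window_hi /window_lo.
by rewrite -[(block_width j)%:R]/(((block_width j)%:Z)%:~R) wE intrB; lra.
Qed.

Lemma window_lo_lt_hi j : (j < N)%N -> window_lo j < window_hi j.
Proof. by move=> /window_widthE wE; have := ler0n R (block_width j); lra. Qed.

Lemma lt_window_lo p j : (p < block_start j)%N -> (j < N)%N ->
  (xcoord P p)%:~R < window_lo j.
Proof.
move=> pj jN; have := xcoord_ler_add1 sortedP R pj.
have := block_end_lt jN; rewrite /window_lo /block_end => end_lt.
by move=> /(_ ltac:(lia)); lra.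
Qed.

Lemma window_hi_lt p j : (block_end j < p)%N -> (p < size P)%N ->
  window_hi j < (xcoord P p)%:~R.
Proof. by move=> jp p_lt; have := xcoord_ler_add1 sortedP R jp p_lt; rewrite /window_hi; lra. Qed.

Lemma window_hi_lt_lo i j : (i < j)%N -> (j < N)%N -> window_hi i < window_lo j.
Proof.
move=> ij jN; have := block_end_lt jN.
have : (i.+1 * m <= j * m)%N by rewrite leq_mul2r ij orbT.
rewrite /window_hi /window_lo /block_end /block_start => ijm end_lt.
by have := xcoord_ler_add1 sortedP R (i := a0 + i * m + m - 1) (j := a0 + j * m)
  ltac:(lia) ltac:(lia); lra.
Qed.

Lemma blocks_dichotomy L : (0 < N)%N -> (2 ^ L <= m - 1)%N ->
  (exists2 j, (j < N)%N & (2 ^ (L + N - 1) <= block_width j)%N)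
  \/ exists i j, [/\ (i < j)%N, (j < N)%N &
                     trunc_log 2 (block_width i) = trunc_log 2 (block_width j)].
Proof.
move=> N_gt0 Lm; have width_gt0 j : (j < N)%N -> (0 < block_width j)%N.
  by case/block_widthE => _; have := expn_gt0 2 L; lia.
have [log_uniq | /(uniqPn 0%N) [i [j [ij jN same]]]] :=
  boolP (uniq [seq trunc_log 2 (block_width j) | j <- iota 0 N]).
- have log_ge j : (j < N)%N -> (L <= trunc_log 2 (block_width j))%N.
    by move=> jN; apply: trunc_log_max => //; case/block_widthE: jN => _; lia.
  left; have [j jN large] := uniq_ge_has_large N_gt0 log_ge log_uniq.
  exists j => //; apply: leq_trans (trunc_logP (isT : (1 < 2)%N) (width_gt0 _ jN)).
  by rewrite leq_pexp2l.
- right; rewrite size_map size_iota in jN.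
  rewrite !(nth_map 0%N) ?size_iota ?nth_iota ?(ltn_trans ij) // in same.
  by exists i, j.
Qed.

Lemma equal_log_windows p q i j : (p < a0)%N -> (a0 + N * m <= q < size P)%N ->
  (1 < m)%N -> (i < j < N)%N ->
  trunc_log 2 (block_width i) = trunc_log 2 (block_width j) ->
  exists l1 l2 l3 l4 : R,
    [/\ ((xcoord P p)%:~R < l1) && (l1 < l2) && (l2 < l3) && (l3 < l4)
          && (l4 < (xcoord P q)%:~R),
        count_between P l1 l2 = m, count_between P l3 l4 = m &
        1 / 2 <= (l2 - l1) / (l4 - l3) <= 2].
Proof.
move=> pa0 /andP [q_ge q_lt] m_gt1 /andP [ij jN] same; have iN := ltn_trans ij jN.
exists (window_lo i), (window_hi i), (window_lo j), (window_hi j).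
split; rewrite ?count_window //.
- have lo_i : (xcoord P p)%:~R < window_lo i.
    by apply: lt_window_lo iN; rewrite /block_start; lia.
  have hi_j : window_hi j < (xcoord P q)%:~R.
    by apply: window_hi_lt q_lt; have := block_end_lt jN; lia.
  by rewrite lo_i hi_j !window_lo_lt_hi ?window_hi_lt_lo.
- have width_gt0 l : (l < N)%N -> (0 < block_width l)%N.
    by case/block_widthE => _; lia.
  by rewrite !window_widthE ?trunc_log2_eq_ratio ?width_gt0.
Qed.

End Blocks.

Lemma sqr_le_exp2_sub4 k : (16 <= k)%N -> (k * k <= 2 ^ (k - 4))%N.
Proof.
elim: k => // k IHk; rewrite leq_eqVlt => /orP [/eqP <- // | k_ge16].
have -> : (k.+1 - 4 = (k - 4).+1)%N by lia.
by have := IHk k_ge16; rewrite expnS; nia.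
Qed.

Lemma horton_parameters k t : (16 <= k)%N -> t = up_log 2 (k * k) ->
  let Q := (2 ^ (k - 2))%N in let m := (2 ^ (k - t))%N in
  let N := (2 ^ (t - 1)).-1 in let L := (k - t - 1)%N in
  [/\ (2 ^ k = 4 * Q)%N, (N * m + m = 2 * Q)%N, (2 ^ L <= m - 1)%N, (0 < N)%N
    & (k * k <= 2 * (L + N - 2))%N].
Proof.
move=> k_ge16 tE Q m N L.
have kk_le : (k * k <= 2 ^ t)%N by rewrite tE; apply: up_logP.
have t_le : (t <= k - 4)%N by rewrite tE; apply/up_log_min/sqr_le_exp2_sub4.
have kk_ge : (256 <= k * k)%N by apply: (leq_mul k_ge16 k_ge16).
have t_gt0 : (0 < t)%N by rewrite tE up_log_gt0 /=; lia.
have tN : (2 ^ t = 2 * N.+1)%N by rewrite prednK ?expn_gt0 // -expnS; congr (2 ^ _)%N; lia.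
have mL : (m = 2 * 2 ^ L)%N by rewrite /m /L -expnS; congr (2 ^ _)%N; lia.
have mN : (m * N.+1 = 2 * Q)%N.
  by rewrite prednK ?expn_gt0 // /m /Q -expnD -expnS; congr (2 ^ _)%N; lia.
have L_gt0 := expn_gt0 2 L.
split; [| by rewrite addnC -mulSn mulnC | lia | lia | lia].
by rewrite /Q -[4%N]/(2 ^ 2)%N -expnD; congr (2 ^ _)%N; lia.
Qed.

Theorem lemma3 (R : realFieldType) (k : nat) (P : seq point) :
  (16 <= k)%N ->
  horton k P ->
  let n := (2 ^ k)%N in
  let t := up_log 2 (k * k) in
  let xL : R := (nth (0,0) P (n %/ 4)).1%:~R in
  let xR : R := (nth (0,0) P (3 * n %/ 4 - 1)).1%:~R in
  (* size >= n^{(1/2) log n} = 2^{k^2/2}, i.e. size^2 >= 2^{k^2} *)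
  (2 ^ (k * k) <= pset_size P ^ 2)%N
  \/ exists l1 l2 l3 l4 : R,
       [/\ (xL < l1) && (l1 < l2) && (l2 < l3) && (l3 < l4) && (l4 < xR),
           count_between P l1 l2 = (2 ^ (k - t))%N,
           count_between P l3 l4 = (2 ^ (k - t))%N &
           (1 / 2 <= (l2 - l1) / (l4 - l3) <= 2)].
Proof.
move=> k_ge16 /horton_sorted_size [sortedP sizeP] n t xL xR.
have [nE NmE Lm N_gt0 kk_le] := horton_parameters k_ge16 (erefl t).
set Q := (2 ^ (k - 2))%N in nE NmE *; set m := (2 ^ (k - t))%N in NmE Lm *.
set N := (2 ^ (t - 1)).-1 in NmE N_gt0 kk_le; set L := (k - t - 1)%N in Lm kk_le.
have m_gt0 : (0 < m)%N by rewrite expn_gt0.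
have fit : (Q.+1 + N * m <= 3 * Q - 1 < size P)%N by rewrite sizeP nE; lia.
have fitP : (Q.+1 + N * m <= size P)%N by lia.
rewrite /xL /xR /n nE mulKn // mulnCA mulKn // -/(xcoord P Q) -/(xcoord P (3 * Q - 1)).
have [[j jN wide] | [i [j [ij jN same]]]] := blocks_dichotomy m_gt0 sortedP fitP N_gt0 Lm.
- left; have big : (2 ^ (L + N - 2) <= pset_size P)%N.
    apply: (pset_size_ge_block_width m_gt0 sortedP fitP jN); apply: leq_trans wide.
    by rewrite leq_pexp2l //; lia.
  apply: (@leq_trans (2 ^ ((L + N - 2) * 2))); last by rewrite expnM leq_exp2r.
  by rewrite leq_pexp2l //; lia.
- right; apply: (equal_log_windows R m_gt0 sortedP fitP _ _ _ _ same) => //.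
  + by have := expn_gt0 2 L; lia.
  + by rewrite ij.
Qed.
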